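(* Let $\{F_b\}$ be a finite POVM on $\mathbb{C}^d$, let $\mathcal{F}$ be the trace-preserving operation $\mathcal{F}(\rho)=\sum_b F_b^{1/2}\rho F_b^{1/2}$, and let $\mathcal{A}(\rho)=\sum_{b,i}A_{bi}\rho A_{bi}^\dagger$ be any operation with $\sum_iA_{bi}^\dagger A_{bi}=F_b$ for each $b$. Then $$F_e(I/d,\mathcal{A})\le F_e(I/d,\mathcal{F}).$$
   Context: A POVM is a finite family of positive semidefinite operators $F_b$ with $\sum_bF_b=I$. For an operation $\mathcal{A}(\rho)=\sum_kA_k\rho A_k^\dagger$ and density operator $\rho$, the entanglement fidelity is $F_e(\rho,\mathcal{A})=\sum_k|\mathrm{tr}(A_k\rho)|^2$. *)

(* complex numbers = algC (algebraic complex numbers,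
   a numClosedFieldType).  Matrices on C^d are 'M[algC]_d. *)
From Stdlib Require Import ClassicalEpsilon.
From HB Require Import structures.
From mathcomp Require Import all_boot all_order all_algebra all_field.
Set Implicit Arguments. Unset Strict Implicit. Unset Printing Implicit Defensive.
Import Order.TTheory GRing.Theory Num.Theory.
Local Open Scope ring_scope.

Definition adjmx (m n : nat) (A : 'M[algC]_(m, n)) : 'M[algC]_(n, m) :=
  (map_mx Num.conj A)^T.

(* positive semidefinite: <v, A v> >= 0 for all v (over C this entails
   hermiticity, since 0 <= z in algC means z is a nonnegative real) *)
Definition psdmx (d : nat) (A : 'M[algC]_d) : Prop :=
  forall v : 'cV[algC]_d, 0 <= (adjmx v *m A *m v) 0 0.

Definition povm (d : nat) (B : finType) (F : B -> 'M[algC]_d) : Prop :=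
  (forall b, psdmx (F b)) /\ \sum_(b : B) F b = 1%:M.

(* The PSD square root A^{1/2}: the (unique) PSD matrix S with S*S = A,
   chosen by classical choice (exists whenever A is PSD). *)
Definition psd_sqrt (d : nat) (A : 'M[algC]_d) : 'M[algC]_d :=
  epsilon (inhabits 0) (fun S => psdmx S /\ S *m S = A).

Definition ent_fid (d : nat) (K : finType) (rho : 'M[algC]_d)
  (A : K -> 'M[algC]_d) : algC :=
  \sum_(k : K) `|\tr (A k *m rho)| ^+ 2.

Definition maxmixed (d : nat) : 'M[algC]_d := (d%:R)^-1 *: 1%:M.

From Stdlib Require Import ClassicalEpsilon.
From HB Require Import structures.
From mathcomp Require Import all_boot all_order all_algebra all_field.
From mathcomp Require Import ring.
Import Order.TTheory GRing.Theory Num.Theory.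
Set Implicit Arguments. Unset Strict Implicit. Unset Printing Implicit Defensive.
Local Open Scope ring_scope.

(* Since F_e(I/d, X) = d^-2 sum_k |tr X_k|^2, it suffices to show, for each b
   and S := F_b^(1/2), that sum_i |tr A_bi|^2 <= (tr S)^2 whenever
   sum_i A_bi^† A_bi = S^2.  In an orthonormal eigenbasis of S, with
   eigenvalues s_k >= 0, the (k,k) entry of this identity gives
   sum_i |(A_bi)_kk|^2 <= s_k^2; so the diagonals of the A_bi, viewed as
   vectors indexed by i, have l2-norms at most s_k, and Minkowski's
   inequality bounds sum_i |sum_k (A_bi)_kk|^2 by (sum_k s_k)^2. *)

Section SumsOfSquares.
Variables (R : numDomainType) (I : finType).

Lemma CauchySchwarz_sum (x y : I -> R) :
  (forall i, x i \is Num.real) -> (forall i, y i \is Num.real) ->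
  (\sum_i x i * y i) ^+ 2 <= (\sum_i x i ^+ 2) * (\sum_i y i ^+ 2).
Proof.
move=> xR yR; pose D i j := x i ^+ 2 * y j ^+ 2 - x i * y i * (x j * y j).
have Lagrange : \sum_i \sum_j (x i * y j - x j * y i) ^+ 2
    = ((\sum_i x i ^+ 2) * (\sum_j y j ^+ 2) - (\sum_i x i * y i) ^+ 2) *+ 2.
  have -> : (\sum_i x i ^+ 2) * (\sum_j y j ^+ 2) - (\sum_i x i * y i) ^+ 2
      = \sum_i \sum_j D i j.
    by rewrite expr2 !big_distrlr -sumrB; apply: eq_bigr => i _; rewrite -sumrB.
  rewrite mulr2n [in X in _ + X]exchange_big -big_split /=.
  by apply: eq_bigr => i _; rewrite -big_split; apply: eq_bigr => j _ /=; rewrite /D; ring.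
rewrite -subr_ge0 -(pmulrn_lge0 _ (ltn0Sn 1)) -Lagrange.
by do 2![apply: sumr_ge0 => ? _]; rewrite -realEsqr realB ?realM.
Qed.

Lemma ler_sum_mul_sqr (x y : I -> R) (a b : R) :
  (forall i, 0 <= x i) -> (forall i, 0 <= y i) -> 0 <= a -> 0 <= b ->
  \sum_i x i ^+ 2 <= a ^+ 2 -> \sum_i y i ^+ 2 <= b ^+ 2 ->
  \sum_i x i * y i <= a * b.
Proof.
move=> x0 y0 a0 b0 xa yb.
have xy0 : 0 <= \sum_i x i * y i by apply: sumr_ge0 => i _; apply: mulr_ge0.
rewrite -(ler_pXn2r (ltn0Sn 1)) ?nnegrE ?mulr_ge0 // exprMn.
apply: le_trans (CauchySchwarz_sum (fun i => ger0_real (x0 i)) (fun i => ger0_real (y0 i))) _.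
by apply: ler_pM => //; apply: sumr_ge0 => i _; apply: exprn_ge0.
Qed.

Lemma Minkowski_sum (K : finType) (x : I -> K -> R) (s : K -> R) :
  (forall i k, 0 <= x i k) -> (forall k, 0 <= s k) ->
  (forall k, \sum_i x i k ^+ 2 <= s k ^+ 2) ->
  \sum_i (\sum_k x i k) ^+ 2 <= (\sum_k s k) ^+ 2.
Proof.
move=> x0 s0 xs; rewrite expr2 big_distrlr /=.
under eq_bigr do rewrite expr2 big_distrlr /=.
rewrite exchange_big; apply: ler_sum => k _.
rewrite exchange_big; apply: ler_sum => l _.
exact: ler_sum_mul_sqr.
Qed.

End SumsOfSquares.

Lemma adjmxE m n (A : 'M[algC]_(m, n)) : adjmx A = (A ^t*)%sesqui.
Proof. by rewrite /adjmx map_trmx. Qed.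

Lemma adjmxK m n (A : 'M[algC]_(m, n)) : adjmx (adjmx A) = A.
Proof. by apply/matrixP=> i j; rewrite !mxE conjCK. Qed.

Lemma adjmxM m n p (A : 'M[algC]_(m, n)) (B : 'M[algC]_(n, p)) :
  adjmx (A *m B) = adjmx B *m adjmx A.
Proof. by rewrite /adjmx map_mxM trmx_mul. Qed.

Lemma adjmxD m n (A B : 'M[algC]_(m, n)) : adjmx (A + B) = adjmx A + adjmx B.
Proof. by apply/matrixP=> i j; rewrite !mxE rmorphD. Qed.

Lemma adjmxZ m n c (A : 'M[algC]_(m, n)) : adjmx (c *: A) = c^* *: adjmx A.
Proof. by apply/matrixP=> i j; rewrite !mxE rmorphM. Qed.

Lemma adjmx_delta n (i : 'I_n) : adjmx (delta_mx i 0) = delta_mx 0 i :> 'rV_n.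
Proof. by apply/matrixP=> a b; rewrite !mxE; do 2!case: eqP => //=; rewrite ?conjC1 ?conjC0. Qed.

Lemma unitarymx_adj n (P : 'M[algC]_n) : P \is unitarymx ->
  P *m adjmx P = 1%:M /\ adjmx P *m P = 1%:M.
Proof. by move=> /unitarymxP; rewrite -adjmxE => PP; split=> //; apply: mulmx1C. Qed.

Definition sesqmx n (A : 'M[algC]_n) (u v : 'cV[algC]_n) : algC :=
  (adjmx u *m A *m v) 0 0.

Lemma sesqmxE n (A : 'M[algC]_n) u v : sesqmx A u v = \tr (adjmx u *m A *m v).
Proof. by rewrite trace_mx11. Qed.

Lemma sesqmx_delta n (A : 'M[algC]_n) i j :
  sesqmx A (delta_mx i 0) (delta_mx j 0) = A i j.
Proof. by rewrite /sesqmx adjmx_delta -rowE -colE !mxE. Qed.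

Lemma sesqmxB n (A B : 'M[algC]_n) u v :
  sesqmx (A - B) u v = sesqmx A u v - sesqmx B u v.
Proof. by rewrite /sesqmx mulmxBr mulmxBl !mxE. Qed.

Lemma sesqmx_adj n (A : 'M[algC]_n) v : sesqmx (adjmx A) v v = (sesqmx A v v)^*.
Proof. by rewrite /sesqmx -{2}[v]adjmxK -!adjmxM mulmxA !mxE. Qed.

Lemma sesqmx_congruence n (A P : 'M[algC]_n) v :
  sesqmx (adjmx P *m A *m P) v v = sesqmx A (P *m v) (P *m v).
Proof. by rewrite /sesqmx adjmxM !mulmxA. Qed.

Lemma sesqmx_diag n (s : 'rV[algC]_n) v :
  sesqmx (diag_mx s) v v = \sum_k s 0 k * `|v k 0| ^+ 2.
Proof.
rewrite /sesqmx mul_mx_diag !mxE; apply: eq_bigr => k _.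
by rewrite !mxE normCKC mulrAC mulrC.
Qed.

Lemma sesqmx_eq0 n (N : 'M[algC]_n) : (forall v, sesqmx N v v = 0) -> N = 0.
Proof.
move=> N0; apply/matrixP=> i j; rewrite mxE.
have Nkk k : N k k = 0 by rewrite -sesqmx_delta N0.
have polar c : sesqmx N (delta_mx i 0 + c *: delta_mx j 0) (delta_mx i 0 + c *: delta_mx j 0)
    = c * N i j + c^* * N j i.
  rewrite sesqmxE adjmxD adjmxZ !mulmxDl !mulmxDr -!scalemxAl -!scalemxAr.
  by rewrite !mxtraceD !mxtraceZ -!sesqmxE !sesqmx_delta !Nkk; ring.
have := polar 1; have := polar 'i; rewrite !N0 conjC1 conjCi !mul1r => Ei E1.
have i2 : 1 + 'i * 'i = 0 :> algC by rewrite -expr2 sqrCi subrr.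
have : N i j *+ 2 = (N i j + N j i) - 'i * ('i * N i j + - 'i * N j i)
                    + (1 + 'i * 'i) * (N i j - N j i) by ring.
by rewrite -E1 -Ei i2 mulr0 mul0r subr0 addr0 => /eqP; rewrite mulrn_eq0 => /eqP.
Qed.

Lemma psdmx_adj n (A : 'M[algC]_n) : psdmx A -> adjmx A = A.
Proof.
move=> A0; apply/eqP; rewrite -subr_eq0; apply/eqP/sesqmx_eq0 => v.
by rewrite sesqmxB sesqmx_adj geC0_conj ?subrr //; apply: A0.
Qed.

Lemma psdmx_congruence_diag n (P : 'M[algC]_n) (s : 'rV[algC]_n) :
  (forall k, 0 <= s 0 k) -> psdmx (adjmx P *m diag_mx s *m P).
Proof.
move=> s0 v; rewrite -/(sesqmx _ v v) sesqmx_congruence sesqmx_diag.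
by apply: sumr_ge0 => k _; rewrite mulr_ge0 ?exprn_ge0.
Qed.

Lemma psdmx_diagonalize n (A : 'M[algC]_n) : psdmx A ->
  exists (P : 'M[algC]_n) (s : 'rV[algC]_n),
    [/\ P \is unitarymx, forall k, 0 <= s 0 k
                & A = adjmx P *m diag_mx s *m P].
Proof.
move=> A0; have /orthomx_spectralP eA : A \is normalmx.
  by apply/normalmxP; rewrite -adjmxE psdmx_adj.
have PU := spectral_unitarymx A.
rewrite invmx_unitary // -adjmxE in eA.
set P := spectralmx A in PU eA *; set s := spectral_diag A in eA *.
exists P, s; split=> // k.
have [PP _] := unitarymx_adj PU.
have := A0 (adjmx P *m delta_mx k 0); rewrite -/(sesqmx _ _ _) eA sesqmx_congruence.
by rewrite mulmxA PP mul1mx sesqmx_delta mxE eqxx mulr1n.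
Qed.

Lemma psd_sqrtP n (A : 'M[algC]_n) : psdmx A ->
  psdmx (psd_sqrt A) /\ psd_sqrt A *m psd_sqrt A = A.
Proof.
move=> A0; apply: (epsilon_spec (inhabits 0) (fun S => psdmx S /\ S *m S = A)).
have [P [s [PU s0 ->]]] := psdmx_diagonalize A0.
have [PP _] := unitarymx_adj PU.
pose r := \row_k sqrtC (s 0 k).
exists (adjmx P *m diag_mx r *m P); split.
  by apply: psdmx_congruence_diag => k; rewrite mxE sqrtC_ge0.
rewrite !mulmxA -[_ *m P *m adjmx P]mulmxA PP mulmx1 -[_ *m diag_mx r *m diag_mx r]mulmxA.
by rewrite mulmx_diag; congr (_ *m diag_mx _ *m _); apply/rowP => k; rewrite !mxE -expr2 sqrtCK.
Qed.

Lemma sum_sqr_diag_le_gram n (I : finType) (B : I -> 'M[algC]_n) k :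
  \sum_i `|B i k k| ^+ 2 <= (\sum_i adjmx (B i) *m B i) k k.
Proof.
rewrite summxE; apply: ler_sum => i _.
rewrite !mxE (bigD1 k) //= !mxE -normCKC lerDl.
by apply: sumr_ge0 => j _; rewrite !mxE -normCKC exprn_ge0.
Qed.

Lemma sum_sqr_trace_le n (I : finType) (A : I -> 'M[algC]_n) (S : 'M[algC]_n) :
  psdmx S -> S *m S = \sum_i adjmx (A i) *m A i ->
  \sum_i `|\tr (A i)| ^+ 2 <= `|\tr S| ^+ 2.
Proof.
move=> S0 SA; have [P [s [PU s0 eS]]] := psdmx_diagonalize S0.
have [PP PP'] := unitarymx_adj PU.
have cancelP m (X : 'M[algC]_(m, n)) : X *m P *m adjmx P = X by rewrite -mulmxA PP mulmx1.
have cancelP' m (X : 'M[algC]_(m, n)) : X *m adjmx P *m P = X by rewrite -mulmxA PP' mulmx1.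
pose B i := P *m A i *m adjmx P.
have trB i : \tr (A i) = \tr (B i) by rewrite mxtrace_mulC mulmxA PP' mul1mx.
have trS : \tr S = \sum_k s 0 k by rewrite eS mxtrace_mulC mulmxA PP mul1mx mxtrace_diag.
have gramB : \sum_i adjmx (B i) *m B i = diag_mx s *m diag_mx s.
  transitivity (P *m (S *m S) *m adjmx P).
    rewrite SA mulmx_sumr mulmx_suml; apply: eq_bigr => i _.
    by rewrite !adjmxM adjmxK !mulmxA cancelP'.
  by rewrite eS !mulmxA PP mul1mx !cancelP.
have diagB k : \sum_i `|B i k k| ^+ 2 <= s 0 k ^+ 2.
  by rewrite (le_trans (sum_sqr_diag_le_gram B k)) // gramB mulmx_diag !mxE eqxx mulr1n expr2.
rewrite trS ger0_norm ?sumr_ge0 //.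
apply: le_trans (Minkowski_sum (fun i k => normr_ge0 (B i k k)) s0 diagB).
apply: ler_sum => i _; rewrite trB lerXn2r ?nnegrE ?sumr_ge0 //; exact: ler_norm_sum.
Qed.

Lemma ent_fid_maxmixed d (K : finType) (X : K -> 'M[algC]_d) :
  ent_fid (maxmixed d) X = `|d%:R^-1 : algC| ^+ 2 * \sum_k `|\tr (X k)| ^+ 2.
Proof.
rewrite /ent_fid /maxmixed mulr_sumr; apply: eq_bigr => k _.
by rewrite -scalemxAr mulmx1 mxtraceZ normrM exprMn.
Qed.

Theorem mainTheorem10 (d : nat) (B I : finType)
  (F : B -> 'M[algC]_d) (A : B -> I -> 'M[algC]_d) :
  (0 < d)%N ->
  povm F ->
  (forall b : B, \sum_(i : I) adjmx (A b i) *m A b i = F b) ->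
  ent_fid (maxmixed d) (fun bi : B * I => A bi.1 bi.2)
    <= ent_fid (maxmixed d) (fun b : B => psd_sqrt (F b)).
Proof.
move=> _ [F0 _] AF; rewrite !ent_fid_maxmixed ler_wpM2l ?exprn_ge0 //.
rewrite -(pair_bigA _ (fun b i => `|\tr (A b i)| ^+ 2)) /=.
apply: ler_sum => b _; have [sqrt0 sqrtK] := psd_sqrtP (F0 b).
by apply: sum_sqr_trace_le; rewrite // sqrtK AF.
Qed.
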